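(* For arbitrary positive integers $m$ and $n$, there exist a finite alphabet $A$, a letter $a\in A$, and languages $K,L\subseteq A^*$ with syntactic monoids $M$ and $N$ satisfying $|M|=m$, $|N|=n$, such that the syntactic monoid of the language $KaL=\{\,uav\mid u\in K,\ v\in L\,\}$ has exactly $mn(2^{mn}-1)+1$ elements.
   Context: The syntactic congruence of $R\subseteq A^*$ is $u\sim_R v$ iff for all $p,q\in A^*$, $puq\in R\Leftrightarrow pvq\in R$; the syntactic monoid of $R$ is $A^*/{\sim_R}$. *)

From mathcomp Require Import all_boot.
Set Implicit Arguments. Unset Strict Implicit. Unset Printing Implicit Defensive.

Definition language (A : Type) := seq A -> Prop.

Definition synt_equiv (A : Type) (R : language A) (u v : seq A) : Prop :=
  forall p q : seq A, R (p ++ u ++ q) <-> R (p ++ v ++ q).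

(* The syntactic monoid A^*/~_R has exactly k elements: there are k words,
   pairwise non-equivalent, such that every word is equivalent to one of them
   (i.e. a bijection 'I_k -> A^*/~_R, written out on representatives). *)
Definition synt_monoid_card (A : Type) (R : language A) (k : nat) : Prop :=
  exists w : 'I_k -> seq A,
    (forall i j, synt_equiv R (w i) (w j) -> i = j) /\
    (forall u : seq A, exists i, synt_equiv R u (w i)).

Definition marked_concat (A : Type) (K : language A) (a : A) (L : language A)
  : language A :=
  fun w => exists u v, K u /\ L v /\ w = u ++ a :: v.

(* Take finite abelian groups G and H and the alphabet of the letters (g, h) of
   G x H together with a marker a.  Let K (resp. L) be the words whose letters
   have first (resp. second) coordinates summing to 0; their syntactic monoids
   are G and H.  A word w is determined modulo KaL by its value (x, y) in G x H
   and its set of cuts, the pairs (gval u, hval v) over the factorizations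
   w = u a v: the context (p, q) puts w in KaL iff a cut of p, a cut of q, or a
   cut of w shifted by the values of p and q is (0, 0).  If every pair is a cut,
   w is a zero and its value is irrelevant; otherwise the value is recovered by
   suitable contexts.  Every pair of a value and a cut set is realised, so the
   syntactic monoid has |G||H|(2^{|G||H|} - 1) + 1 elements. *)
From mathcomp Require Import all_boot ssralg finalg zmodp.
Import GRing.Theory.

Set Implicit Arguments.
Unset Strict Implicit.
Unset Printing Implicit Defensive.

Lemma synt_monoid_card_classifier (A : Type) (R : language A) (D : finType)
    (S : {set D}) (cl : seq A -> D) (rep : D -> seq A) :
    (forall u, cl u \in S) -> {in S, cancel rep cl} ->
    (forall u v, synt_equiv R u v <-> cl u = cl v) -> synt_monoid_card R #|S|.
Proof.
move=> clS repK equivE; exists (fun i => rep (enum_val i)); split.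
- by move=> i j /equivE; rewrite !repK ?enum_valP //; apply: enum_val_inj.
- move=> u; exists (enum_rank_in (clS u) (cl u)); apply/equivE.
  by rewrite enum_rankK_in // repK.
Qed.

Lemma synt_monoid_card_kernel (A : Type) (G : finZmodType) (f : seq A -> G)
    (word_of : G -> seq A) :
    {morph f : u v / u ++ v >-> (u + v)%R} -> cancel word_of f ->
    synt_monoid_card (fun u => f u = 0%R) #|G|.
Proof.
move=> fM word_ofK; rewrite -cardsT.
apply: (synt_monoid_card_classifier (fun u => in_setT (f u)) (in1W word_ofK)).
move=> u v; split=> [equiv_uv | fE p q]; last by rewrite !fM fE.
have := equiv_uv [::] (word_of (- f u)%R).
rewrite /= !fM word_ofK subrr => -[/(_ erefl) /eqP].
by rewrite subr_eq0 => /eqP ->.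
Qed.

Section MarkedProduct.
Variables G H : finZmodType.
Local Open Scope ring_scope.

Local Notation letter := (option (G * H)).
Local Notation marker := (None : letter).

Fixpoint gval (w : seq letter) : G :=
  if w is c :: w' then (if c is Some xy then xy.1 + gval w' else gval w') else 0.

Fixpoint hval (w : seq letter) : H :=
  if w is c :: w' then (if c is Some xy then xy.2 + hval w' else hval w') else 0.

Lemma gval_cat u v : gval (u ++ v) = gval u + gval v.
Proof. by elim: u => [|[[x y]|] u IH] /=; rewrite ?add0r ?IH ?addrA. Qed.

Lemma hval_cat u v : hval (u ++ v) = hval u + hval v.
Proof. by elim: u => [|[[x y]|] u IH] /=; rewrite ?add0r ?IH ?addrA. Qed.

Definition K : language letter := fun u => gval u = 0.
Definition L : language letter := fun v => hval v = 0.
Definition KaL : language letter := marked_concat K marker L.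

Fixpoint cutb (w : seq letter) (st : G * H) : bool :=
  match w with
  | [::] => false
  | None :: w' => (st == (0, hval w')) || cutb w' st
  | Some xy :: w' => cutb w' (st.1 - xy.1, st.2)
  end.

Lemma cutb_cat u v st :
  cutb (u ++ v) st = cutb u (st.1, st.2 - hval v) || cutb v (st.1 - gval u, st.2).
Proof.
elim: u st => [|[[x y]|] u IH] [s t] /=.
- by rewrite subr0.
- by rewrite IH /= opprD addrA.
- by rewrite IH hval_cat orbA !xpair_eqE subr_eq.
Qed.

Lemma cutbP w s t :
  reflect (exists u v, [/\ w = u ++ marker :: v, gval u = s & hval v = t])
          (cutb w (s, t)).
Proof.
apply: (iffP idP) => [|[u [v [-> <- <-]]]]; last first.
  by rewrite cutb_cat /= !subrr eqxx orbT.
elim: w s => [|[[x y]|] w IH] s //=.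
- case/IH => u [v [-> gu hv]]; exists (Some (x, y) :: u), v.
  by rewrite /= gu addrC subrK.
- case/orP => [/eqP [-> ->] | /IH [u [v [-> gu hv]]]]; first by exists [::], w.
  by exists (marker :: u), v.
Qed.

Lemma KaL_cutb w : KaL w <-> cutb w (0, 0).
Proof.
split=> [[u [v [Ku [Lv ->]]]] | /cutbP [u [v [-> Ku Lv]]]]; last by exists u, v.
by apply/cutbP; exists u, v.
Qed.

Lemma cutb_context p u q : cutb (p ++ u ++ q) (0, 0) =
  [|| cutb p (0, - (hval u + hval q)), cutb u (- gval p, - hval q)
    | cutb q (- gval p - gval u, 0)].
Proof. by rewrite !cutb_cat /= hval_cat !sub0r orbA. Qed.

Lemma synt_equiv_KaLE u v : synt_equiv KaL u v <->
  forall p q, cutb (p ++ u ++ q) (0, 0) = cutb (p ++ v ++ q) (0, 0).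
Proof.
split=> equiv_uv p q; first by apply/idP/idP => /KaL_cutb/equiv_uv/KaL_cutb.
by split=> /KaL_cutb; [rewrite equiv_uv | rewrite -equiv_uv] => /KaL_cutb.
Qed.

Definition cutset u := [set st | cutb u st].

(* Words whose cut set is full lie in KaL in every context: they all collapse
   to the zero of the syntactic monoid, so their value is forgotten. *)
Definition synt_class u : G * H * {set G * H} :=
  if cutset u == setT then ((0, 0), setT) else ((gval u, hval u), cutset u).

Lemma synt_class_equiv u v : synt_class u = synt_class v -> synt_equiv KaL u v.
Proof.
rewrite /synt_class => classE; apply/synt_equiv_KaLE => p q; rewrite !cutb_context.
have cutbE w : cutset w = setT -> forall st, cutb w st.
  by move=> full st; have := in_setT st; rewrite -full inE.
move: classE; case: eqP => [/cutbE fu | uNfull]; case: eqP => [/cutbE fv | vNfull].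
- by rewrite fu fv !orbT.
- by case=> _ _ /esym /vNfull.
- by case=> _ _ /uNfull.
case=> -> -> /setP cutE; have {}cutE st : cutb u st = cutb v st.
  by have := cutE st; rewrite !inE.
by rewrite cutE.
Qed.

Lemma synt_equiv_cutb u v : synt_equiv KaL u v -> cutb u =1 cutb v.
Proof.
move/synt_equiv_KaLE => equiv_uv [s t].
have := equiv_uv [:: Some (- s, 0)] [:: Some (0, - t)].
by rewrite !cutb_context /= !addr0 !opprK !orbF.
Qed.

(* A word with a non-cut (s, t) has its value read off by the contexts
   ((-s, 0), (s - gval u, -t) a) and (a (-s, t - hval u), (0, -t)). *)
Lemma synt_equiv_val u v s t : synt_equiv KaL u v -> ~~ cutb u (s, t) ->
  gval u = gval v /\ hval u = hval v.
Proof.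
move=> equiv_uv uncut; have cutE := synt_equiv_cutb equiv_uv.
move/synt_equiv_KaLE: equiv_uv => equiv_uv; split.
  have := equiv_uv [:: Some (- s, 0)] [:: Some (s - gval u, - t); marker].
  rewrite !cutb_context /= !addr0 !opprK -cutE (negbTE uncut) /= !orbF.
  rewrite subrr !xpair_eqE !eqxx !andbT subr_eq0.
  by move=> /esym /eqP /addrI /oppr_inj ->.
have := equiv_uv [:: marker; Some (- s, t - hval u)] [:: Some (0, - t)].
rewrite !cutb_context /= !addr0 !opprK -cutE (negbTE uncut) /= !orbF.
rewrite !opprB eqxx xpair_eqE eqxx /=.
by move=> /esym /eqP /addrI /oppr_inj ->.
Qed.

Lemma synt_equiv_class u v : synt_equiv KaL u v -> synt_class u = synt_class v.
Proof.
move=> equiv_uv; have cutE := synt_equiv_cutb equiv_uv.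
have setE : cutset u = cutset v by apply/setP => st; rewrite !inE cutE.
rewrite /synt_class setE; case: eqP => // /eqP; rewrite eqEsubset subsetT /=.
case/subsetPn => -[s t] _; rewrite inE -cutE => uncut.
by have [-> ->] := synt_equiv_val equiv_uv uncut.
Qed.

(* The word (s, -t) a (-s, t) has value zero and its only cut is (s, t). *)
Definition cut_word (st : G * H) : seq letter :=
  [:: Some (st.1, - st.2); marker; Some (- st.1, st.2)].

Definition cuts_word (l : seq (G * H)) : seq letter := flatten (map cut_word l).

Lemma gval_cuts_word l : gval (cuts_word l) = 0.
Proof. by elim: l => [|[s t] l IH] //; rewrite gval_cat IH /= !addr0 subrr. Qed.

Lemma hval_cuts_word l : hval (cuts_word l) = 0.
Proof. by elim: l => [|[s t] l IH] //; rewrite hval_cat IH /= !addr0 addNr. Qed.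

Lemma cutb_cuts_word l st : cutb (cuts_word l) st = (st \in l).
Proof.
elim: l st => [|[s t] l IH] [s' t'] //.
rewrite cutb_cat IH hval_cuts_word /= !addr0 subrr !subr0 orbF in_cons.
by rewrite !xpair_eqE subr_eq0.
Qed.

Definition class_word (d : G * H * {set G * H}) : seq letter :=
  Some (0, d.1.2) :: cuts_word (enum d.2) ++ [:: Some (d.1.1, 0)].

Definition synt_classes : {set G * H * {set G * H}} :=
  ((0, 0), setT) |: setX setT [set~ setT].

Lemma synt_class_in u : synt_class u \in synt_classes.
Proof.
rewrite /synt_class; case: ifP => [_|full]; first exact: setU11.
by apply: setU1r; rewrite in_setX in_setT in_setC1 full.
Qed.

Lemma class_wordK : {in synt_classes, cancel class_word synt_class}.
Proof.
move=> d; have cutsE : cutset (class_word d) = d.2.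
  apply/setP => st; rewrite inE /= cutb_cat /= cutb_cuts_word orbF.
  by rewrite addr0 !subr0 -surjective_pairing mem_enum.
rewrite /synt_class cutsE; case/setU1P => [-> | ]; first by rewrite eqxx.
case: d cutsE => [[x y] P] _ /setXP [_]; rewrite in_setC1 => /negbTE /= ->.
by rewrite gval_cat hval_cat gval_cuts_word hval_cuts_word /= !addr0 !add0r.
Qed.

Lemma card_synt_classes :
  #|synt_classes| = (#|G| * #|H| * (2 ^ (#|G| * #|H|) - 1) + 1)%N.
Proof.
have card_sets : #|{set G * H}| = 2 ^ (#|G| * #|H|).
  by rewrite -cardsT -powersetT card_powerset cardsT card_prod.
rewrite cardsU1 in_setX in_setC1 eqxx andbF cardsX cardsC1 cardsT card_prod.
by rewrite card_sets subn1 addnC.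
Qed.

Lemma K_card : synt_monoid_card K #|G|.
Proof.
apply: (synt_monoid_card_kernel gval_cat (word_of := fun x => [:: Some (x, 0)])).
by move=> x /=; rewrite addr0.
Qed.

Lemma L_card : synt_monoid_card L #|H|.
Proof.
apply: (synt_monoid_card_kernel hval_cat (word_of := fun y => [:: Some (0, y)])).
by move=> y /=; rewrite addr0.
Qed.

Lemma KaL_card :
  synt_monoid_card KaL (#|G| * #|H| * (2 ^ (#|G| * #|H|) - 1) + 1)%N.
Proof.
rewrite -card_synt_classes.
apply: (synt_monoid_card_classifier synt_class_in class_wordK) => u v.
by split; [apply: synt_equiv_class | apply: synt_class_equiv].
Qed.

End MarkedProduct.

Theorem proposition5 (m n : nat) (hm : 0 < m) (hn : 0 < n) :
  exists (A : finType) (a : A) (K L : language A),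
    synt_monoid_card K m /\ synt_monoid_card L n /\
    synt_monoid_card (marked_concat K a L) (m * n * (2 ^ (m * n) - 1) + 1).
Proof.
case: m hm => // m _; case: n hn => // n _.
pose G : finZmodType := 'I_m.+1; pose H : finZmodType := 'I_n.+1.
exists (option (G * H)), None, (@K G H), (@L G H); split; last split.
- by have := @K_card G H; rewrite card_ord.
- by have := @L_card G H; rewrite card_ord.
- by have := @KaL_card G H; rewrite !card_ord.
Qed.
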